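(* Suppose Assumption A and Assumption B (defined in the context) hold for the dynamic accuracy DFO algorithm described in the context. If at iteration $k$ the model $m^k$ is fully linear in $B(\theta^k,\Delta^k)$ and $$\Delta^k\le c_0\|g^k\|,\qquad c_0:=\min\left(\frac{1-\eta_2-2\eta_1'}{4\kappa_{\rm ef}},\frac{1}{\kappa_H}\right)>0,$$ then $\tilde\rho^k\ge\eta_2$.
   Context: Setting. Let $n,d\ge 1$ and $r=(r_1,\ldots,r_n):\mathbb{R}^d\to\mathbb{R}^n$, with objective $f(\theta)=\frac1n\|r(\theta)\|^2=\frac1n\sum_{i=1}^n r_i(\theta)^2$ (Euclidean norm). In the application, $r_i(\theta)=\|\hat x_i(\theta)-x_i\|$ where $\hat x_i(\theta)$ is the minimizer of a lower-level problem that can only be computed approximately. The algorithm never sees $r$ exactly: for any $\theta$ it can compute an approximation $\tilde r(\theta)$ (in the application $\tilde r_i(\theta)=\|\tilde x_i(\theta)-x_i\|$ with $\tilde x_i(\theta)$ an approximate minimizer whose error can be made as small as desired), and sets $\tilde f(\theta)=\frac1n\|\tilde r(\theta)\|^2$. We say $\tilde f(\theta)$ is evaluated with accuracy $\delta$ if $|\tilde f(\theta)-f(\theta)|\le\delta$. Models. At iteration $k$ the algorithm holds an iterate $\theta^k$, a radius $\Delta^k>0$, and interpolation points $z^0=\theta^k,z^1,\ldots,z^d\in\mathbb{R}^d$ with $z^1-\theta^k,\ldots,z^d-\theta^k$ linearly independent; $J^k\in\mathbb{R}^{n\times d}$ is the unique matrix with $\tilde r(\theta^k)+J^k(z^t-\theta^k)=\tilde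 r(z^t)$ for $t=1,\ldots,d$. Set $M^k(s)=\tilde r(\theta^k)+J^k s$ and $m^k(s)=\frac1n\|M^k(s)\|^2=\tilde f(\theta^k)+(g^k)^Ts+\frac12 s^TH^ks$ with $g^k=\frac2n (J^k)^T\tilde r(\theta^k)$, $H^k=\frac2n(J^k)^TJ^k$. Fixed constants $\kappa_{\rm ef},\kappa_{\rm eg}>0$ (independent of $k,\theta^k,\Delta^k$) are given, and $m^k$ is called fully linear in $B(\theta^k,\Delta^k)$ if $|f(\theta^k+s)-m^k(s)|\le\kappa_{\rm ef}(\Delta^k)^2$ and $\|\nabla f(\theta^k+s)-\nabla m^k(s)\|\le\kappa_{\rm eg}\Delta^k$ for all $\|s\|\le\Delta^k$. The algorithm has a procedure which, by replacing interpolation points, makes the model fully linear in a given ball. Algorithm. Parameters: $\Delta_{\max}>0$, $0<\gamma_{\rm dec}<1<\gamma_{\rm inc}$, $0<\eta_1\le\eta_2<1$, $0<\eta_1'<\min(\eta_1,1-\eta_2)/2$, $\epsilon>0$; inputs $\theta^0\in\mathbb{R}^d$, $0<\Delta^0\le\Delta_{\max}$. Build an initial model $m^0$ from an arbitrary interpolation set. For $k=0,1,2,\ldots$: (1) [accuracy phase] repeat: (a) except on the first pass, re-evaluate $\tilde f(\theta^k)$ with accuracy $\delta^k\le\eta_1'[m^k(0)-m^k(s^k)]$ using the $s^k$ from the previous pass; (b) [criticality phase] if $\|g^k\|\le\epsilon$, replace $\Delta^k$ by $\gamma_{\rm dec}^i\Delta^k$ for $i=0,1,2,\ldots$ (making the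 model fully linear in the current ball) until $m^k$ is fully linear in $B(\theta^k,\Delta^k)$ and $\Delta^k\le\|g^k\|$; (c) compute $s^k$ with $\|s^k\|\le\Delta^k$ approximately minimizing $m^k$ over that ball; until $\tilde f(\theta^k)$ has been evaluated with accuracy $\delta^k\le\eta_1'[m^k(0)-m^k(s^k)]$. (2) Evaluate $\tilde f(\theta^k+s^k)$ with accuracy $\delta^k_+\le\eta_1'[m^k(0)-m^k(s^k)]$ and set $\tilde\rho^k=\frac{\tilde f(\theta^k)-\tilde f(\theta^k+s^k)}{m^k(0)-m^k(s^k)}$. (3) Set $\theta^{k+1}=\theta^k+s^k$ if $\tilde\rho^k\ge\eta_2$, or if $\tilde\rho^k\ge\eta_1$ and $m^k$ is fully linear in $B(\theta^k,\Delta^k)$; otherwise $\theta^{k+1}=\theta^k$. Set $\Delta^{k+1}=\min(\gamma_{\rm inc}\Delta^k,\Delta_{\max})$ if $\tilde\rho^k\ge\eta_2$; $\Delta^{k+1}=\Delta^k$ if $\tilde\rho^k<\eta_2$ and $m^k$ is not fully linear in $B(\theta^k,\Delta^k)$; $\Delta^{k+1}=\gamma_{\rm dec}\Delta^k$ otherwise. (4) If $\theta^{k+1}=\theta^k+s^k$, form $m^{k+1}$ by adding $\theta^{k+1}$ to the interpolation set (removing an existing point); otherwise set $m^{k+1}=m^k$ if $m^k$ is fully linear in $B(\theta^k,\Delta^k)$, else form $m^{k+1}$ by making $m^k$ fully linear in $B(\theta^{k+1},\Delta^{k+1})$. Assumption A: the set $\mathcal{B}=\{z: \|z-\theta\|\le\Delta_{\max}\text{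 for some }\theta\text{ with }f(\theta)\le f(\theta^0)\}$ is bounded, and $r$ is continuously differentiable on $\mathcal{B}$ with $\partial r$ Lipschitz continuous with constant $L_J$ on $\mathcal{B}$. Assumption B: for all $k$, $m^k(0)-m^k(s^k)\ge\frac12\|g^k\|\min\left(\Delta^k,\frac{\|g^k\|}{\|H^k\|+1}\right)$, and there is $\kappa_H\ge1$ with $\|H^k\|+1\le\kappa_H$ for all $k$. *)

From HB Require Import structures.
From mathcomp Require Import all_boot all_order all_algebra.
From mathcomp Require Import all_classical all_reals all_analysis.
Set Implicit Arguments. Unset Strict Implicit. Unset Printing Implicit Defensive.
Import Order.TTheory GRing.Theory Num.Theory.
Import numFieldNormedType.Exports.
Local Open Scope classical_set_scope.
Local Open Scope ring_scope.

Section Defs.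
Variable R : realType.

Definition enorm m p (A : 'M[R]_(m, p)) : R :=
  Num.sqrt (\sum_(i < m) \sum_(j < p) A i j ^+ 2).

Definition opnorm m p (A : 'M[R]_(m, p)) : R :=
  sup [set enorm (A *m v) | v in [set v : 'cV[R]_p | enorm v <= 1]].

Definition grad d (f : 'cV[R]_d -> R) (x : 'cV[R]_d) : 'cV[R]_d :=
  \col_(i < d) ('d f x (delta_mx i 0 : 'cV[R]_d)).

Definition jac d n (r : 'cV[R]_d -> 'cV[R]_n) (x : 'cV[R]_d) : 'M[R]_(n, d) :=
  \matrix_(i < n, j < d) ('d r x (delta_mx j 0 : 'cV[R]_d)) i 0.

Definition lsobj d n (r : 'cV[R]_d -> 'cV[R]_n) (x : 'cV[R]_d) : R :=
  (enorm (r x)) ^+ 2 / n%:R.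

Definition model d n (rt : 'cV[R]_n) (J : 'M[R]_(n, d)) (s : 'cV[R]_d) : R :=
  (enorm (rt + J *m s)) ^+ 2 / n%:R.

Definition mgrad d n (rt : 'cV[R]_n) (J : 'M[R]_(n, d)) : 'cV[R]_d :=
  (2 / n%:R) *: (J^T *m rt).
Definition mhess d n (J : 'M[R]_(n, d)) : 'M[R]_d :=
  (2 / n%:R) *: (J^T *m J).

Definition fully_linear d n (kef keg : R) (r : 'cV[R]_d -> 'cV[R]_n)
  (theta : 'cV[R]_d) (Delta : R) (rt : 'cV[R]_n) (J : 'M[R]_(n, d)) : Prop :=
  forall s : 'cV[R]_d, enorm s <= Delta ->
    `| lsobj r (theta + s) - model rt J s | <= kef * Delta ^+ 2 /\
    enorm (grad (lsobj r) (theta + s) - (mgrad rt J + mhess J *m s))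
      <= keg * Delta.

Definition setB d n (r : 'cV[R]_d -> 'cV[R]_n) (Dmax : R) (theta0 : 'cV[R]_d)
  : set 'cV[R]_d :=
  [set z | exists theta, lsobj r theta <= lsobj r theta0 /\
                         enorm (z - theta) <= Dmax].

Definition assumptionA d n (r : 'cV[R]_d -> 'cV[R]_n) (Dmax : R)
  (theta0 : 'cV[R]_d) (LJ : R) : Prop :=
  (exists M : R, forall z, setB r Dmax theta0 z -> enorm z <= M) /\
  (forall z, setB r Dmax theta0 z -> differentiable r z) /\
  {within setB r Dmax theta0, continuous (jac r)} /\
  (forall x y, setB r Dmax theta0 x -> setB r Dmax theta0 y ->
     opnorm (jac r x - jac r y) <= LJ * enorm (x - y)).

End Defs.

From HB Require Import structures.
From mathcomp Require Import all_boot all_order all_algebra.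
From mathcomp Require Import all_classical all_reals all_analysis.
From mathcomp Require Import ring lra.
Import Order.TTheory GRing.Theory Num.Theory.
Import numFieldNormedType.Exports.
Local Open Scope classical_set_scope.
Local Open Scope ring_scope.

(* Once the radius is below ||g|| / kappa_H, the Cauchy decrease of
   Assumption B is at least ||g|| Delta / 2.  The model error of a fully linear
   model is at most kef Delta^2, and Delta <= c0 ||g|| makes this a fraction
   (1 - eta2 - 2 eta1') / 2 of the predicted decrease; the error in evaluating
   the objective at the trial point costs another eta1' of it.  Hence the
   achieved decrease is at least (1 + eta2) / 2 >= eta2 times the predicted
   one.  Note that m^k(0) is the computed value of the objective at theta^k, so
   the accuracy of that evaluation plays no role. *)

Section TrustRegionArithmetic.
Set Implicit Arguments.
Unset Strict Implicit.
Context {R : realFieldType}.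

Lemma le_min_mul (a b g x : R) :
  0 <= g -> x <= Num.min a b * g -> x <= a * g /\ x <= b * g.
Proof. by move=> g_ge0; rewrite minr_pMl // le_min => /andP. Qed.

Lemma sqr_radius_le_decrease (kef c Delta g pred : R) :
  0 < kef -> 0 <= Delta -> 0 <= c ->
  Delta <= c / (4 * kef) * g -> g * Delta / 2 <= pred ->
  kef * Delta ^+ 2 <= c / 2 * pred.
Proof.
move=> kef_gt0 Delta_ge0 c_ge0 Delta_le decr.
have kef_Delta : kef * Delta <= c / 4 * g.
  have -> : c / 4 * g = kef * (c / (4 * kef) * g) by field; rewrite gt_eqF.
  by rewrite ler_pM2l.
have : kef * Delta * Delta <= c / 4 * g * Delta by rewrite ler_wpM2r.
have : c / 2 * (g * Delta / 2) <= c / 2 * pred by rewrite ler_wpM2l ?divr_ge0.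
rewrite expr2 mulrA; lra.
Qed.

Lemma ratio_ge_of_errors (eta2 eta1' m0 ms fs fp err : R) :
  eta2 <= 1 -> 0 < m0 - ms ->
  `|fs - ms| <= err -> err <= (1 - eta2 - 2 * eta1') / 2 * (m0 - ms) ->
  `|fp - fs| <= eta1' * (m0 - ms) ->
  eta2 <= (m0 - fp) / (m0 - ms).
Proof.
move=> eta2_le1 pred_gt0 /ler_normlP[_ model_err] err_le /ler_normlP[_ eval_err].
rewrite ler_pdivlMr //.
have : 0 <= (1 - eta2) * (m0 - ms).
  by apply: mulr_ge0; [rewrite subr_ge0 | exact: ltW].
lra.
Qed.

End TrustRegionArithmetic.

Lemma enorm0 (R : realType) m p : enorm (0 : 'M[R]_(m, p)) = 0.
Proof.
rewrite /enorm (eq_bigr (fun _ => 0)) ?big1 ?sqrtr0 // => i _.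
by rewrite big1 // => j _; rewrite mxE expr0n.
Qed.

Lemma opnorm_ge0 (R : realType) m p (A : 'M[R]_(m, p)) : 0 <= opnorm A.
Proof.
rewrite /opnorm; set E := [set _ | _ in _].
have [E_sup|] := pselect (has_sup E); last by move=> /sup_out->.
have E0 : E 0 by exists 0; rewrite /= ?enorm0 ?mulmx0 ?enorm0.
exact: sup_upper_bound E_sup _ E0.
Qed.

Theorem lemma7 (R : realType) (n d : nat) (r : 'cV[R]_d -> 'cV[R]_n)
  (Dmax eta1 eta2 eta1' kef keg kH LJ : R) (theta0 : 'cV[R]_d)
  (* iteration-k data *)
  (theta : 'cV[R]_d) (Delta : R) (rt : 'cV[R]_n) (J : 'M[R]_(n, d))
  (s : 'cV[R]_d) (ft_plus delta delta_plus : R) :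
  (0 < n)%N -> (0 < d)%N ->
  0 < Dmax -> 0 < eta1 -> eta1 <= eta2 -> eta2 < 1 ->
  0 < eta1' -> eta1' < Num.min eta1 (1 - eta2) / 2 ->
  0 < kef -> 0 < keg ->
  (* Assumption A *)
  assumptionA r Dmax theta0 LJ ->
  (* Assumption B (at iteration k) *)
  model rt J 0 - model rt J s >=
    (enorm (mgrad rt J)) / 2 *
      Num.min Delta (enorm (mgrad rt J) / (opnorm (mhess J) + 1)) ->
  1 <= kH -> opnorm (mhess J) + 1 <= kH ->
  (* step and radius *)
  0 < Delta -> enorm s <= Delta ->
  (* accuracy of ft(theta^k) = m^k(0) and of ft(theta^k + s^k) *)
  `| model rt J 0 - lsobj r theta | <= delta ->
  delta <= eta1' * (model rt J 0 - model rt J s) ->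
  `| ft_plus - lsobj r (theta + s) | <= delta_plus ->
  delta_plus <= eta1' * (model rt J 0 - model rt J s) ->
  (* hypotheses of the lemma *)
  fully_linear kef keg r theta Delta rt J ->
  Delta <= Num.min ((1 - eta2 - 2 * eta1') / (4 * kef)) (1 / kH)
             * enorm (mgrad rt J) ->
  (model rt J 0 - ft_plus) / (model rt J 0 - model rt J s) >= eta2.
Proof.
move=> _ _ _ _ _ eta2_lt1 _ eta1'_lt kef_gt0 _ _ cauchy _ H_le_kH Delta_gt0
  s_le _ _ eval_err delta_plus_le fl Delta_le.
set g := enorm (mgrad rt J) in cauchy Delta_le.
set H := opnorm (mhess J) + 1 in cauchy H_le_kH.
have H_gt0 : 0 < H by rewrite ltr_wpDl ?opnorm_ge0.
have g_ge0 : 0 <= g by exact: sqrtr_ge0.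
have [Delta_c0 Delta_kH] := le_min_mul g_ge0 Delta_le.
have g_gt0 : 0 < g.
  rewrite lt_neqAle g_ge0 andbT; apply: contraTneq Delta_c0 => <-.
  by rewrite mulr0 -ltNge.
have Delta_H : Delta <= g / H.
  by apply: (le_trans Delta_kH); rewrite mul1r mulrC ler_wpM2l ?lef_pV2 ?posrE
    ?(lt_le_trans H_gt0).
have decrease : g * Delta / 2 <= model rt J 0 - model rt J s.
  by move: cauchy; rewrite (min_idPl Delta_H) mulrAC.
have margin_ge0 : 0 <= 1 - eta2 - 2 * eta1'.
  move: eta1'_lt; rewrite ltr_pdivlMr // lt_min => /andP[_ /ltW].
  by rewrite -subr_ge0 (mulrC eta1').
apply: (ratio_ge_of_errors (ltW eta2_lt1)).
- by apply: lt_le_trans decrease; rewrite divr_gt0 ?mulr_gt0.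
- exact: (fl s s_le).1.
- exact: sqr_radius_le_decrease (ltW Delta_gt0) margin_ge0 Delta_c0 decrease.
- exact: le_trans eval_err delta_plus_le.
Qed.
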